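(* Let $\lambda>0$ be constant and let $\alpha:[-1,1]\times[0,\infty)\to\mathbb{R}^2$ be a solution of the length-penalised elastic flow $\partial_t\alpha=(k_{ss}+\frac12k^3-\lambda k)\nu$ with generalised Neumann boundary conditions in the cone. Then $$\frac{d}{dt}\int_\alpha k_s^2\,ds\le-\frac18\int_\alpha k_{s^3}^2\,ds-\frac{13}{6}\bar k^4\int_\alpha k_s^2\,ds-2\lambda\int_\alpha k_{ss}^2\,ds+14\lambda\Big(\|k-\bar k\|_\infty^2+\bar k^2\Big)\int_\alpha k_s^2\,ds$$ $$\qquad-22\bar k^3\int_\alpha(k-\bar k)k_s^2\,ds+5\int_\alpha(k-\bar k)^2k_{ss}^2\,ds+10\bar k\int_\alpha(k-\bar k)k_{ss}^2\,ds.$$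
   Context: The cone: fix $0\le\theta_2<\theta_1<2\pi$; its boundary consists of the open rays $\bar\gamma_i=\{(\rho\cos\theta_i,\rho\sin\theta_i):\rho>0\}$, $i=1,2$. The flow evolves with generalised Neumann boundary conditions: for each $t$ the curve's interior lies in the open cone between the rays, $\alpha(-1,t)\in\bar\gamma_1$, $\alpha(1,t)\in\bar\gamma_2$, the curve meets each ray perpendicularly, and $k_s(\pm1,t)=0$ (neither end reaches the cone tip). Here $s$ is arc length, $\nu$ the outer unit normal, $k=-\langle\alpha_{ss},\nu\rangle$ the scalar curvature, $k_{s^\ell}$ its $\ell$-th arc-length derivative, $L$ the length, $\bar k=\frac1L\int_\alpha k\,ds$, and $\|\cdot\|_\infty$ the sup norm over the curve. Integrals are over $\alpha(\cdot,t)$ with respect to arc length. *)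

From Stdlib Require Import Reals.
From Coquelicot Require Import Coquelicot.
Open Scope R_scope.

Fixpoint dt_n (m : nat) (f : R -> R -> R) : R -> R -> R :=
  match m with
  | O => f
  | S m' => fun u t => Derive (fun s => dt_n m' f u s) t
  end.

Definition pd (n m : nat) (f : R -> R -> R) : R -> R -> R :=
  fun u t => Derive_n (fun v => dt_n m f v t) n u.

Definition smooth2 (f : R -> R -> R) : Prop :=
  forall (n m : nat),
    (forall u t, ex_derive (fun v => pd n m f v t) u /\
                 ex_derive (fun s => pd n m f u s) t) /\
    (forall p : R * R,
       continuous (fun q : R * R => pd n m f (fst q) (snd q)) p) /\
    (forall p : R * R,
       continuous (fun q : R * R => Derive (fun s => pd n m f (fst q) s) (snd q)) p).

Definition speed (x y : R -> R) (u : R) : R :=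
  sqrt ((Derive x u) ^ 2 + (Derive y u) ^ 2).

Definition ds (x y : R -> R) (f : R -> R) : R -> R :=
  fun u => Derive f u / speed x y u.

Fixpoint ds_n (x y : R -> R) (n : nat) (f : R -> R) : R -> R :=
  match n with
  | O => f
  | S n' => ds x y (ds_n x y n' f)
  end.

(* outer unit normal nu = J tau, J = counterclockwise rotation by pi/2,
   tau = alpha_s; the curve runs from the ray theta1 to the ray theta2
   (theta2 < theta1), i.e. clockwise around the tip, so J tau points
   away from the tip (outer). *)
Definition nu1 (x y : R -> R) : R -> R := fun u => - ds x y y u.
Definition nu2 (x y : R -> R) : R -> R := fun u => ds x y x u.

Definition curv (x y : R -> R) : R -> R :=
  fun u => - (ds_n x y 2 x u * nu1 x y u + ds_n x y 2 y u * nu2 x y u).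

Definition kder (x y : R -> R) (l : nat) : R -> R := ds_n x y l (curv x y).

Definition arcint (x y : R -> R) (f : R -> R) : R :=
  RInt (fun u => f u * speed x y u) (-1) 1.

Definition length (x y : R -> R) : R := arcint x y (fun _ => 1).

Definition kbar (x y : R -> R) : R := arcint x y (curv x y) / length x y.

Definition supnorm (f : R -> R) : R :=
  real (Lub_Rbar (fun r => exists u, -1 <= u <= 1 /\ r = Rabs (f u))).

Definition on_ray (th : R) (p1 p2 : R) : Prop :=
  exists rho, 0 < rho /\ p1 = rho * cos th /\ p2 = rho * sin th.

Definition in_open_cone (th1 th2 : R) (p1 p2 : R) : Prop :=
  exists rho th, 0 < rho /\ th2 < th < th1 /\
                 p1 = rho * cos th /\ p2 = rho * sin th.

Definition elastic_flow_cone (lam th1 th2 : R) (X Y : R -> R -> R) : Prop :=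
  smooth2 X /\ smooth2 Y /\
  (forall u t, -1 <= u <= 1 -> 0 <= t ->
     speed (fun v => X v t) (fun v => Y v t) u <> 0) /\
  (forall u t, -1 <= u <= 1 -> 0 <= t ->
     let x := fun v => X v t in
     let y := fun v => Y v t in
     let V := kder x y 2 u + (1/2) * (curv x y u) ^ 3 - lam * curv x y u in
     Derive (fun s => X u s) t = V * nu1 x y u /\
     Derive (fun s => Y u s) t = V * nu2 x y u) /\
  (forall t, 0 <= t ->
     let x := fun v => X v t in
     let y := fun v => Y v t in
     (forall u, -1 < u < 1 -> in_open_cone th1 th2 (x u) (y u)) /\
     on_ray th1 (x (-1)) (y (-1)) /\
     on_ray th2 (x 1) (y 1) /\
     Derive x (-1) * cos th1 + Derive y (-1) * sin th1 = 0 /\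
     Derive x 1 * cos th2 + Derive y 1 * sin th2 = 0 /\
     kder x y 1 (-1) = 0 /\
     kder x y 1 1 = 0).

(* Write [sigma = |alpha_u|], [V = k_ss + k^3/2 - lam k] for the normal velocity and
   [W = - V_ss - k^2 V].  Along the flow [sigma_t = k V sigma] and [k_t = W], hence
   [(k_s)_t = W_s - k V k_s] and [d/dt \int k_s^2 ds = \int (2 k_s W_s - k V k_s^2) ds].
   Differentiating in time the orthogonality to the rays, which holds at all times, forces
   [V_s = 0] at both ends; together with [k_s = 0] there, all boundary terms of the
   integrations by parts vanish and the integrand becomes a polynomial in
   [k, k_s, k_ss, k_sss].  Writing [k = kbar + w] with [|w| <= |k - kbar|_oo], this
   polynomial is bounded by the integrand of the right-hand side up to a sum of squares. *)

From Stdlib Require Import Reals Lra.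
From Coquelicot Require Import Coquelicot.
Open Scope R_scope.

(** * Partial derivatives and smoothness in two variables *)

Definition Du (F : R -> R -> R) : R -> R -> R :=
  fun u s => Derive (fun v => F v s) u.
Definition Dt (F : R -> R -> R) : R -> R -> R :=
  fun u s => Derive (fun z => F u z) s.

Definition open2 (Om : R -> R -> Prop) : Prop :=
  forall u s, Om u s -> locally_2d Om u s.

Fixpoint Cn (Om : R -> R -> Prop) (n : nat) (F : R -> R -> R) : Prop :=
  match n with
  | O => forall u s, Om u s -> continuity_2d_pt F u s
  | S n => (forall u s, Om u s -> continuity_2d_pt F u s /\
              ex_derive (fun v => F v s) u /\ ex_derive (fun z => F u z) s)
           /\ Cn Om n (Du F) /\ Cn Om n (Dt F)
  end.

Definition Cinf (Om : R -> R -> Prop) (F : R -> R -> R) : Prop := forall n, Cn Om n F.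

Section PartialDerivativeRules.
Variables (F H : R -> R -> R) (u s : R).

Lemma Du_plus : ex_derive (fun v => F v s) u -> ex_derive (fun v => H v s) u ->
  Du (fun a b => F a b + H a b) u s = Du F u s + Du H u s.
Proof. apply (Derive_plus (fun v => F v s)). Qed.

Lemma Dt_plus : ex_derive (fun z => F u z) s -> ex_derive (fun z => H u z) s ->
  Dt (fun a b => F a b + H a b) u s = Dt F u s + Dt H u s.
Proof. apply (Derive_plus (fun z => F u z)). Qed.

Lemma Du_minus : ex_derive (fun v => F v s) u -> ex_derive (fun v => H v s) u ->
  Du (fun a b => F a b - H a b) u s = Du F u s - Du H u s.
Proof. apply (Derive_minus (fun v => F v s)). Qed.

Lemma Dt_minus : ex_derive (fun z => F u z) s -> ex_derive (fun z => H u z) s ->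
  Dt (fun a b => F a b - H a b) u s = Dt F u s - Dt H u s.
Proof. apply (Derive_minus (fun z => F u z)). Qed.

Lemma Du_opp : Du (fun a b => - F a b) u s = - Du F u s.
Proof. apply (Derive_opp (fun v => F v s)). Qed.

Lemma Dt_opp : Dt (fun a b => - F a b) u s = - Dt F u s.
Proof. apply (Derive_opp (fun z => F u z)). Qed.

Lemma Du_scal c : Du (fun a b => c * F a b) u s = c * Du F u s.
Proof. apply (Derive_scal (fun v => F v s)). Qed.

Lemma Du_mult : ex_derive (fun v => F v s) u -> ex_derive (fun v => H v s) u ->
  Du (fun a b => F a b * H a b) u s = Du F u s * H u s + F u s * Du H u s.
Proof. apply (Derive_mult (fun v => F v s)). Qed.

Lemma Dt_mult : ex_derive (fun z => F u z) s -> ex_derive (fun z => H u z) s ->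
  Dt (fun a b => F a b * H a b) u s = Dt F u s * H u s + F u s * Dt H u s.
Proof. apply (Derive_mult (fun z => F u z)). Qed.

Lemma Dt_div : ex_derive (fun z => F u z) s -> ex_derive (fun z => H u z) s -> H u s <> 0 ->
  Dt (fun a b => F a b / H a b) u s = (Dt F u s * H u s - F u s * Dt H u s) / H u s ^ 2.
Proof. apply (Derive_div (fun z => F u z)). Qed.

Lemma Du_pow n : ex_derive (fun v => F v s) u ->
  Du (fun a b => F a b ^ n) u s = INR n * Du F u s * F u s ^ Nat.pred n.
Proof. apply (Derive_pow (fun v => F v s)). Qed.

Lemma Dt_pow n : ex_derive (fun z => F u z) s ->
  Dt (fun a b => F a b ^ n) u s = INR n * Dt F u s * F u s ^ Nat.pred n.
Proof. apply (Derive_pow (fun z => F u z)). Qed.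
End PartialDerivativeRules.

Lemma Du_ext_interval (F H : R -> R -> R) t u : (forall v, -1 < v < 1 -> F v t = H v t) ->
  -1 < u < 1 -> Du F u t = Du H u t.
Proof.
  intros E hu. unfold Du. apply Derive_ext_loc.
  assert (hp : 0 < Rmin (u + 1) (1 - u)) by (apply Rmin_pos; lra).
  exists (mkposreal _ hp). intros v Hv. apply E.
  change (Rabs (v - u) < Rmin (u + 1) (1 - u)) in Hv.
  pose proof (Rmin_l (u + 1) (1 - u)). pose proof (Rmin_r (u + 1) (1 - u)).
  apply Rabs_def2 in Hv. lra.
Qed.

Lemma Derive_sqrt (f : R -> R) x : ex_derive f x -> 0 < f x ->
  Derive (fun z => sqrt (f z)) x = Derive f x / (2 * sqrt (f x)).
Proof.
  intros [df Hd] hp. apply is_derive_unique.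
  rewrite (is_derive_unique _ _ _ Hd). now apply is_derive_sqrt.
Qed.

Lemma ex_derive_sqrt (f : R -> R) x : ex_derive f x -> 0 < f x ->
  ex_derive (fun z => sqrt (f z)) x.
Proof. intros [df Hd] hp. eexists. apply is_derive_sqrt; eassumption. Qed.

Lemma continuity_2d_pt_eq_approx (A B : R -> R -> R) u t :
  continuity_2d_pt A u t -> continuity_2d_pt B u t ->
  (forall d, 0 < d -> exists v, Rabs (v - u) < d /\ A v t = B v t) -> A u t = B u t.
Proof.
  intros HA HB H. destruct (Req_dec (A u t) (B u t)) as [E|E]; [exact E|exfalso].
  assert (he : 0 < Rabs (A u t - B u t) / 2) by (apply Rdiv_lt_0_compat; [apply Rabs_pos_lt|]; lra).
  destruct (HA (mkposreal _ he)) as [d1 H1]. destruct (HB (mkposreal _ he)) as [d2 H2].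
  destruct (H _ (Rmin_pos d1 d2 (cond_pos d1) (cond_pos d2))) as [v [hv Ev]].
  specialize (H1 v t (Rlt_le_trans _ _ _ hv (Rmin_l _ _))).
  specialize (H2 v t (Rlt_le_trans _ _ _ hv (Rmin_r _ _))).
  rewrite Rminus_diag, Rabs_R0 in H1, H2. simpl in H1, H2.
  specialize (H1 (cond_pos d1)). specialize (H2 (cond_pos d2)). rewrite Ev in H1.
  assert (Rabs (A u t - B u t) <= Rabs (B v t - B u t) + Rabs (B v t - A u t)).
  { replace (A u t - B u t) with ((B v t - B u t) - (B v t - A u t)) by ring.
    eapply Rle_trans; [apply Rabs_triang | rewrite Rabs_Ropp; lra]. }
  lra.
Qed.

Lemma Du_ext_closed_interval (F H : R -> R -> R) t u :
  continuity_2d_pt (Du F) u t -> continuity_2d_pt (Du H) u t ->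
  (forall v, -1 < v < 1 -> F v t = H v t) -> -1 <= u <= 1 -> Du F u t = Du H u t.
Proof.
  intros cF cH E hu. apply continuity_2d_pt_eq_approx; [exact cF | exact cH |].
  intros d hd. pose proof (Rmin_l d 1). pose proof (Rmin_r d 1).
  pose proof (Rmin_pos d 1 hd Rlt_0_1).
  set (v := u + (- u) * (Rmin d 1 / 2)).
  assert (hv : Rabs (v - u) < d /\ -1 < v < 1).
  { unfold v. replace (u + - u * (Rmin d 1 / 2) - u) with (- u * (Rmin d 1 / 2)) by ring.
    rewrite Rabs_mult, Rabs_Ropp, (Rabs_pos_eq (Rmin d 1 / 2)) by lra.
    assert (Rabs u <= 1) by (apply Rabs_le; lra).
    split; [nra|]. split; nra. }
  exists v. split; [apply hv|]. apply Du_ext_interval; [exact E | apply hv].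
Qed.

Lemma continuity_2d_pt_slice_u (F : R -> R -> R) u s :
  continuity_2d_pt F u s -> continuity_pt (fun v => F v s) u.
Proof.
  intros H eps heps. destruct (H (mkposreal eps heps)) as [d Hd].
  exists d. split; [apply cond_pos|]. intros y [_ hy].
  apply Hd; [exact hy | rewrite Rminus_diag, Rabs_R0; apply cond_pos].
Qed.

Lemma continuity_2d_pt_swap (F : R -> R -> R) u s :
  continuity_2d_pt F u s -> continuity_2d_pt (fun a b => F b a) s u.
Proof. intros H eps. destruct (H eps) as [d Hd]. exists d. intros a b ha hb. now apply Hd. Qed.

Lemma is_derive_vanishing_right (g : R -> R) t l :
  is_derive g t l -> (forall s, t <= s -> g s = 0) -> l = 0.
Proof.
  intros Hd Hz. apply is_derive_Reals in Hd.
  destruct (Req_dec l 0) as [E|E]; [exact E|exfalso].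
  assert (he : 0 < Rabs l) by (apply Rabs_pos_lt, E).
  destruct (Hd (Rabs l) he) as [d Hdd].
  pose proof (cond_pos d) as hd.
  specialize (Hdd (d / 2)). rewrite !Hz in Hdd by lra.
  assert (H : Rabs ((0 - 0) / (d / 2) - l) < Rabs l).
  { apply Hdd; [lra | rewrite Rabs_pos_eq; lra]. }
  replace ((0 - 0) / (d / 2) - l) with (- l) in H by (field; lra).
  rewrite Rabs_Ropp in H. lra.
Qed.

Lemma is_RInt_plus_R (f g : R -> R) a b A B :
  is_RInt f a b A -> is_RInt g a b B -> is_RInt (fun u => f u + g u) a b (A + B).
Proof. apply (is_RInt_plus f g). Qed.

Lemma is_RInt_minus_R (f g : R -> R) a b A B :
  is_RInt f a b A -> is_RInt g a b B -> is_RInt (fun u => f u - g u) a b (A - B).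
Proof. apply (is_RInt_minus f g). Qed.

Lemma is_RInt_scal_R (f : R -> R) a b c A :
  is_RInt f a b A -> is_RInt (fun u => c * f u) a b (c * A).
Proof. apply (is_RInt_scal f). Qed.

Ltac is_RInt_lincomb :=
  match goal with
  | |- is_RInt _ _ _ (_ + _) => eapply is_RInt_plus_R; [is_RInt_lincomb | is_RInt_lincomb]
  | |- is_RInt _ _ _ (_ - _) => eapply is_RInt_minus_R; [is_RInt_lincomb | is_RInt_lincomb]
  | |- is_RInt _ _ _ (_ * _) => eapply is_RInt_scal_R; is_RInt_lincomb
  | |- is_RInt _ _ _ (RInt _ _ _) => apply (RInt_correct (V := R_CompleteNormedModule))
  end.

Implicit Types (F H : R -> R -> R) (u s : R).

Section Smoothness.
Variable Om : R -> R -> Prop.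
Hypothesis Om_open : open2 Om.

Lemma Cn_continuity n F u s : Cn Om n F -> Om u s -> continuity_2d_pt F u s.
Proof. destruct n as [|n]; [intros H h | intros [H _] h]; apply (H u s h). Qed.

Lemma Cn_pred n F : Cn Om (S n) F -> Cn Om n F.
Proof.
  revert F; induction n as [|n IHn]; intros F [H [HDu HDt]].
  - intros u s h; apply (H u s h).
  - split; [exact H | split; apply IHn; assumption].
Qed.

Lemma Cn_ex_derive_u n F u s : Cn Om (S n) F -> Om u s -> ex_derive (fun v => F v s) u.
Proof. intros [H _] h; apply (H u s h). Qed.

Lemma Cn_ex_derive_t n F u s : Cn Om (S n) F -> Om u s -> ex_derive (fun z => F u z) s.
Proof. intros [H _] h; apply (H u s h). Qed.

Lemma Cn_Du n F : Cn Om (S n) F -> Cn Om n (Du F).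
Proof. now intros [_ [H _]]. Qed.

Lemma Cn_Dt n F : Cn Om (S n) F -> Cn Om n (Dt F).
Proof. now intros [_ [_ H]]. Qed.

Lemma open2_locally_eq F H u s : (forall a b, Om a b -> F a b = H a b) -> Om u s ->
  locally_2d (fun a b => F a b = H a b) u s.
Proof.
  intros E h. apply locally_2d_impl with (P := Om); [|now apply Om_open].
  apply locally_2d_forall. exact E.
Qed.

Lemma Du_ext_Om F H u s : (forall a b, Om a b -> F a b = H a b) -> Om u s ->
  Du F u s = Du H u s.
Proof.
  intros E h. apply Derive_ext_loc.
  apply (locally_2d_1d_const_y (fun a b => F a b = H a b)), open2_locally_eq; assumption.
Qed.

Lemma Dt_ext_Om F H u s : (forall a b, Om a b -> F a b = H a b) -> Om u s ->
  Dt F u s = Dt H u s.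
Proof.
  intros E h. apply Derive_ext_loc.
  apply (locally_2d_1d_const_x (fun a b => F a b = H a b)), open2_locally_eq; assumption.
Qed.

Lemma Cn_ext n F H : (forall u s, Om u s -> F u s = H u s) -> Cn Om n F -> Cn Om n H.
Proof.
  revert F H; induction n as [|n IHn]; intros F H E HF.
  - intros u s h. apply continuity_2d_pt_ext_loc with F; [now apply open2_locally_eq|].
    now apply HF.
  - destruct HF as [H0 [HDu HDt]]. split; [|split].
    + intros u s h. destruct (H0 u s h) as [c [du dt]].
      pose proof (open2_locally_eq F H u s E h) as L. split; [|split].
      * now apply continuity_2d_pt_ext_loc with F.
      * exact (ex_derive_ext_loc _ _ _ (locally_2d_1d_const_y _ _ _ L) du).
      * exact (ex_derive_ext_loc _ _ _ (locally_2d_1d_const_x _ _ _ L) dt).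
    + apply IHn with (Du F); [|exact HDu]. intros; now apply Du_ext_Om.
    + apply IHn with (Dt F); [|exact HDt]. intros; now apply Dt_ext_Om.
Qed.

Lemma Cn_const n c : Cn Om n (fun _ _ => c).
Proof.
  revert c; induction n as [|n IHn]; intros c.
  - intros u s _; apply continuity_2d_pt_const.
  - split; [|split].
    + intros u s _. split; [apply continuity_2d_pt_const | split; apply ex_derive_const].
    + apply Cn_ext with (fun _ _ => 0); [|apply IHn].
      intros; unfold Du; now rewrite Derive_const.
    + apply Cn_ext with (fun _ _ => 0); [|apply IHn].
      intros; unfold Dt; now rewrite Derive_const.
Qed.

Lemma Cn_plus n F H : Cn Om n F -> Cn Om n H -> Cn Om n (fun u s => F u s + H u s).
Proof.
  revert F H; induction n as [|n IHn]; intros F H HF HH.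
  - intros u s h; apply continuity_2d_pt_plus; [apply HF | apply HH]; exact h.
  - split; [|split].
    + intros u s h. split; [|split].
      * apply continuity_2d_pt_plus; eapply Cn_continuity; eassumption.
      * apply (ex_derive_plus (fun v => F v s)); eapply Cn_ex_derive_u; eassumption.
      * apply (ex_derive_plus (fun z => F u z)); eapply Cn_ex_derive_t; eassumption.
    + apply Cn_ext with (fun u s => Du F u s + Du H u s).
      * intros u s h; rewrite Du_plus; [easy | |]; eapply Cn_ex_derive_u; eassumption.
      * apply IHn; apply Cn_Du; assumption.
    + apply Cn_ext with (fun u s => Dt F u s + Dt H u s).
      * intros u s h; rewrite Dt_plus; [easy | |]; eapply Cn_ex_derive_t; eassumption.
      * apply IHn; apply Cn_Dt; assumption.
Qed.

Lemma Cn_opp n F : Cn Om n F -> Cn Om n (fun u s => - F u s).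
Proof.
  revert F; induction n as [|n IHn]; intros F HF.
  - intros u s h; apply continuity_2d_pt_opp, HF, h.
  - split; [|split].
    + intros u s h. split; [|split].
      * apply continuity_2d_pt_opp; eapply Cn_continuity; eassumption.
      * apply (ex_derive_opp (fun v => F v s)); eapply Cn_ex_derive_u; eassumption.
      * apply (ex_derive_opp (fun z => F u z)); eapply Cn_ex_derive_t; eassumption.
    + apply Cn_ext with (fun u s => - Du F u s); [intros; symmetry; apply Du_opp|].
      apply IHn, Cn_Du, HF.
    + apply Cn_ext with (fun u s => - Dt F u s); [intros; symmetry; apply Dt_opp|].
      apply IHn, Cn_Dt, HF.
Qed.

Lemma Cn_mult n F H : Cn Om n F -> Cn Om n H -> Cn Om n (fun u s => F u s * H u s).
Proof.
  revert F H; induction n as [|n IHn]; intros F H HF HH.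
  - intros u s h; apply continuity_2d_pt_mult; [apply HF | apply HH]; exact h.
  - split; [|split].
    + intros u s h. split; [|split].
      * apply continuity_2d_pt_mult; eapply Cn_continuity; eassumption.
      * apply ex_derive_mult; eapply Cn_ex_derive_u; eassumption.
      * apply ex_derive_mult; eapply Cn_ex_derive_t; eassumption.
    + apply Cn_ext with (fun u s => Du F u s * H u s + F u s * Du H u s).
      * intros u s h; rewrite Du_mult; [easy | |]; eapply Cn_ex_derive_u; eassumption.
      * apply Cn_plus; apply IHn; auto using Cn_Du, Cn_pred.
    + apply Cn_ext with (fun u s => Dt F u s * H u s + F u s * Dt H u s).
      * intros u s h; rewrite Dt_mult; [easy | |]; eapply Cn_ex_derive_t; eassumption.
      * apply Cn_plus; apply IHn; auto using Cn_Dt, Cn_pred.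
Qed.

Lemma Cn_inv n F : (forall u s, Om u s -> F u s <> 0) ->
  Cn Om n F -> Cn Om n (fun u s => / F u s).
Proof.
  intros Hnz. revert F Hnz; induction n as [|n IHn]; intros F Hnz HF.
  - intros u s h; apply continuity_2d_pt_inv; [apply HF | apply Hnz]; exact h.
  - assert (Hinv : Cn Om n (fun u s => / F u s)) by (apply IHn, Cn_pred; assumption).
    split; [|split].
    + intros u s h. split; [|split].
      * apply continuity_2d_pt_inv; [eapply Cn_continuity; eassumption | auto].
      * apply ex_derive_inv; [eapply Cn_ex_derive_u; eassumption | auto].
      * apply ex_derive_inv; [eapply Cn_ex_derive_t; eassumption | auto].
    + apply Cn_ext with (fun u s => - Du F u s * (/ F u s * / F u s)).
      * intros u s h; unfold Du; rewrite Derive_inv; [field|..]; auto.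
        eapply Cn_ex_derive_u; eassumption.
      * apply Cn_mult; [apply Cn_opp, Cn_Du, HF | now apply Cn_mult].
    + apply Cn_ext with (fun u s => - Dt F u s * (/ F u s * / F u s)).
      * intros u s h; unfold Dt; rewrite (Derive_inv (fun z => F u z)); [field|..]; auto.
        eapply Cn_ex_derive_t; eassumption.
      * apply Cn_mult; [apply Cn_opp, Cn_Dt, HF | now apply Cn_mult].
Qed.

Lemma Cn_sqrt n F : (forall u s, Om u s -> 0 < F u s) ->
  Cn Om n F -> Cn Om n (fun u s => sqrt (F u s)).
Proof.
  intros Hp. revert F Hp; induction n as [|n IHn]; intros F Hp HF.
  - intros u s h. apply continuity_1d_2d_pt_comp; [|now apply HF].
    apply continuity_pt_sqrt, Rlt_le, Hp, h.
  - assert (Hden : Cn Om n (fun u s => / (2 * sqrt (F u s)))).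
    { apply Cn_inv.
      - intros u s h. apply Rgt_not_eq, Rmult_lt_0_compat; [lra|].
        apply sqrt_lt_R0, Hp, h.
      - apply Cn_mult; [apply Cn_const | apply IHn, Cn_pred; assumption]. }
    split; [|split].
    + intros u s h. split; [|split].
      * apply continuity_1d_2d_pt_comp; [|eapply Cn_continuity; eassumption].
        apply continuity_pt_sqrt, Rlt_le, Hp, h.
      * apply ex_derive_sqrt; [eapply Cn_ex_derive_u; eassumption | auto].
      * apply ex_derive_sqrt; [eapply Cn_ex_derive_t; eassumption | auto].
    + apply Cn_ext with (fun u s => Du F u s * / (2 * sqrt (F u s))).
      * intros u s h; unfold Du; rewrite Derive_sqrt; auto.
        eapply Cn_ex_derive_u; eassumption.
      * apply Cn_mult; [apply Cn_Du, HF | exact Hden].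
    + apply Cn_ext with (fun u s => Dt F u s * / (2 * sqrt (F u s))).
      * intros u s h; unfold Dt; rewrite (Derive_sqrt (fun z => F u z)); auto.
        eapply Cn_ex_derive_t; eassumption.
      * apply Cn_mult; [apply Cn_Dt, HF | exact Hden].
Qed.

Lemma Cn_pow n F k : Cn Om n F -> Cn Om n (fun u s => F u s ^ k).
Proof.
  intros HF. induction k as [|k IHk].
  - exact (Cn_const n 1).
  - exact (Cn_mult n F (fun u s => F u s ^ k) HF IHk).
Qed.

Lemma Cinf_Du F : Cinf Om F -> Cinf Om (Du F).
Proof. intros HF n. apply Cn_Du, HF. Qed.

Lemma Cinf_Dt F : Cinf Om F -> Cinf Om (Dt F).
Proof. intros HF n. apply Cn_Dt, HF. Qed.

Lemma Cinf_ext F H : (forall u s, Om u s -> F u s = H u s) -> Cinf Om F -> Cinf Om H.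
Proof. intros E HF n. exact (Cn_ext n F H E (HF n)). Qed.

Lemma Cinf_const c : Cinf Om (fun _ _ => c).
Proof. intros n. apply Cn_const. Qed.

Lemma Cinf_plus F H : Cinf Om F -> Cinf Om H -> Cinf Om (fun u s => F u s + H u s).
Proof. intros HF HH n. apply Cn_plus; [apply HF | apply HH]. Qed.

Lemma Cinf_opp F : Cinf Om F -> Cinf Om (fun u s => - F u s).
Proof. intros HF n. apply Cn_opp, HF. Qed.

Lemma Cinf_minus F H : Cinf Om F -> Cinf Om H -> Cinf Om (fun u s => F u s - H u s).
Proof. intros HF HH. apply Cinf_plus; [exact HF | apply Cinf_opp, HH]. Qed.

Lemma Cinf_mult F H : Cinf Om F -> Cinf Om H -> Cinf Om (fun u s => F u s * H u s).
Proof. intros HF HH n. apply Cn_mult; [apply HF | apply HH]. Qed.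

Lemma Cinf_pow F k : Cinf Om F -> Cinf Om (fun u s => F u s ^ k).
Proof. intros HF n. apply Cn_pow, HF. Qed.

Lemma Cinf_div F H : (forall u s, Om u s -> H u s <> 0) ->
  Cinf Om F -> Cinf Om H -> Cinf Om (fun u s => F u s / H u s).
Proof. intros Hnz HF HH n. apply Cn_mult; [apply HF | apply Cn_inv, HH; exact Hnz]. Qed.

Lemma Cinf_sqrt F : (forall u s, Om u s -> 0 < F u s) ->
  Cinf Om F -> Cinf Om (fun u s => sqrt (F u s)).
Proof. intros Hp HF n. apply Cn_sqrt, HF; exact Hp. Qed.

Lemma Cinf_continuity F u s : Cinf Om F -> Om u s -> continuity_2d_pt F u s.
Proof. intros HF. exact (Cn_continuity 0 F u s (HF 0%nat)). Qed.

Lemma Cinf_continuous_u F u s : Cinf Om F -> Om u s -> continuous (fun v => F v s) u.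
Proof.
  intros HF h. apply continuity_pt_filterlim, continuity_2d_pt_slice_u.
  now apply Cinf_continuity.
Qed.

Lemma Cinf_ex_RInt F s a b : Cinf Om F -> (forall u, Rmin a b <= u <= Rmax a b -> Om u s) ->
  ex_RInt (fun u => F u s) a b.
Proof.
  intros HF Hab. apply (ex_RInt_continuous (V := R_CompleteNormedModule)).
  intros u hu. now apply Cinf_continuous_u, Hab.
Qed.

Lemma Cinf_ex_derive_u F u s : Cinf Om F -> Om u s -> ex_derive (fun v => F v s) u.
Proof. intros HF. exact (Cn_ex_derive_u 0 F u s (HF 1%nat)). Qed.

Lemma Cinf_ex_derive_t F u s : Cinf Om F -> Om u s -> ex_derive (fun z => F u z) s.
Proof. intros HF. exact (Cn_ex_derive_t 0 F u s (HF 1%nat)). Qed.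

Lemma Cinf_Dt_Du F u s : Cinf Om F -> Om u s -> Dt (Du F) u s = Du (Dt F) u s.
Proof.
  intros HF h. symmetry. apply Schwarz.
  - apply locally_2d_impl with (P := Om); [|now apply Om_open].
    apply locally_2d_forall. intros a b hab. split; [|split; [|split]].
    + now apply Cinf_ex_derive_u.
    + now apply Cinf_ex_derive_t.
    + apply (Cinf_ex_derive_u (Dt F)); [apply Cinf_Dt, HF | exact hab].
    + apply (Cinf_ex_derive_t (Du F)); [apply Cinf_Du, HF | exact hab].
  - apply (Cinf_continuity (Du (Dt F))); [apply Cinf_Du, Cinf_Dt, HF | exact h].
  - apply (Cinf_continuity (Dt (Du F))); [apply Cinf_Dt, Cinf_Du, HF | exact h].
Qed.
End Smoothness.

Lemma continuity_2d_pt_continuous F u s :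
  continuous (fun q : R * R => F (fst q) (snd q)) (u, s) -> continuity_2d_pt F u s.
Proof. apply continuity_2d_pt_filterlim. Qed.

Lemma smooth2_continuity_2d_pt F n m u s : smooth2 F -> continuity_2d_pt (pd n m F) u s.
Proof. intros HF. apply continuity_2d_pt_continuous, (proj1 (proj2 (HF n m))). Qed.

Lemma smooth2_Dt_pd F : smooth2 F -> forall n m u s, Dt (pd n m F) u s = pd n (S m) F u s.
Proof.
  intros HF n. induction n as [|n IHn]; intros m u s; [reflexivity|].
  change (pd (S n) m F) with (Du (pd n m F)).
  transitivity (Du (Dt (pd n m F)) u s).
  2: { unfold Du. apply Derive_ext. intros v. apply IHn. }
  symmetry. apply Schwarz.
  - apply locally_2d_forall. intros a b. split; [|split; [|split]].
    + apply (proj1 (HF n m) a b).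
    + apply (proj2 (proj1 (HF n m) a b)).
    + eapply ex_derive_ext; [intros z; symmetry; apply IHn|].
      apply (proj1 (HF n (S m)) a b).
    + apply (proj2 (proj1 (HF (S n) m) a b)).
  - apply continuity_2d_pt_ext with (pd (S n) (S m) F); [|now apply smooth2_continuity_2d_pt].
    intros a b. unfold pd at 1. simpl. apply Derive_ext. intros z. symmetry. apply IHn.
  - apply (continuity_2d_pt_continuous (fun a b => Derive (fun z => pd (S n) m F a z) b)).
    apply (proj2 (proj2 (HF (S n) m))).
Qed.

Lemma smooth2_Cn_pd Om F : open2 Om -> smooth2 F -> forall k n m, Cn Om k (pd n m F).
Proof.
  intros Hop HF k. induction k as [|k IHk]; intros n m.
  - intros u s _. now apply smooth2_continuity_2d_pt.
  - split; [|split].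
    + intros u s _. split; [now apply smooth2_continuity_2d_pt | apply (proj1 (HF n m))].
    + apply (IHk (S n) m).
    + apply Cn_ext with (pd n (S m) F); [exact Hop | |apply IHk].
      intros; symmetry; now apply smooth2_Dt_pd.
Qed.

Lemma smooth2_Cinf Om F : open2 Om -> smooth2 F -> Cinf Om F.
Proof. intros Hop HF k. exact (smooth2_Cn_pd Om F Hop HF k 0 0). Qed.

(** * Geometry of a moving curve *)

Definition speedF (X Y : R -> R -> R) : R -> R -> R :=
  fun u s => speed (fun v => X v s) (fun v => Y v s) u.
Definition DsF (X Y F : R -> R -> R) : R -> R -> R :=
  fun u s => Du F u s / speedF X Y u s.
Definition tanx (X Y : R -> R -> R) : R -> R -> R := DsF X Y X.
Definition tany (X Y : R -> R -> R) : R -> R -> R := DsF X Y Y.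
Definition curvF (X Y : R -> R -> R) : R -> R -> R :=
  fun u s => curv (fun v => X v s) (fun v => Y v s) u.
Definition kderF (X Y : R -> R -> R) (n : nat) : R -> R -> R :=
  fun u s => kder (fun v => X v s) (fun v => Y v s) n u.
Definition normal_velocity (lam : R) (X Y : R -> R -> R) : R -> R -> R :=
  fun u s => kderF X Y 2 u s + 1/2 * curvF X Y u s ^ 3 - lam * curvF X Y u s.
Definition regular (X Y : R -> R -> R) : R -> R -> Prop :=
  fun u s => 0 < Du X u s ^ 2 + Du Y u s ^ 2.

Lemma curvF_tan X Y u s :
  curvF X Y u s = DsF X Y (tanx X Y) u s * tany X Y u s - DsF X Y (tany X Y) u s * tanx X Y u s.
Proof.
  change (curvF X Y u s) with (- (DsF X Y (tanx X Y) u s * (- tany X Y u s)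
    + DsF X Y (tany X Y) u s * tanx X Y u s)).
  ring.
Qed.

Create HintDb cinf.
#[export] Hint Resolve Cinf_Du Cinf_Dt : cinf.

Ltac solve_Cinf :=
  repeat first
    [ solve [eauto with cinf]
    | apply Cinf_const | apply Cinf_plus | apply Cinf_minus | apply Cinf_mult
    | apply Cinf_opp | apply Cinf_pow ].

Section MovingCurve.
Variables X Y : R -> R -> R.
Hypotheses (HX : smooth2 X) (HY : smooth2 Y).

Local Notation Reg := (regular X Y).
Local Notation Sp := (speedF X Y).
Local Notation Ds := (DsF X Y).
Local Notation T1 := (tanx X Y).
Local Notation T2 := (tany X Y).
Local Notation k := (curvF X Y).

Lemma continuity_2d_pt_speed_sq u s :
  continuity_2d_pt (fun a b => Du X a b ^ 2 + Du Y a b ^ 2) u s.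
Proof.
  apply continuity_2d_pt_ext with (fun a b => Du X a b * Du X a b + Du Y a b * Du Y a b);
    [intros; ring|].
  apply continuity_2d_pt_plus; apply continuity_2d_pt_mult;
    apply (smooth2_continuity_2d_pt _ 1 0); assumption.
Qed.

Lemma regular_open : open2 Reg.
Proof.
  intros u s h. pose proof (continuity_2d_pt_speed_sq u s) as Hc.
  apply continuity_2d_pt_neq_0 in Hc; [|apply Rgt_not_eq, h].
  apply locally_2d_impl with (2 := Hc), locally_2d_forall.
  intros a b hab. unfold regular. pose proof (pow2_ge_0 (Du X a b)).
  pose proof (pow2_ge_0 (Du Y a b)). lra.
Qed.

Lemma regular_of_speedF u s : Sp u s <> 0 -> Reg u s.
Proof.
  intros hs. unfold regular.
  destruct (Rle_or_lt (Du X u s ^ 2 + Du Y u s ^ 2) 0) as [hle|hlt]; [exfalso|exact hlt].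
  apply hs. unfold speedF, speed.
  replace (Derive _ u ^ 2 + Derive _ u ^ 2) with 0 by (fold (Du X u s) (Du Y u s); nra).
  apply sqrt_0.
Qed.

Lemma regular_near_time t : (forall u, -1 <= u <= 1 -> Reg u t) ->
  exists d, 0 < d /\ forall s u, Rabs (s - t) < d -> -1 <= u <= 1 -> Reg u s.
Proof.
  intros Ht. set (g := fun a b => Du X a b ^ 2 + Du Y a b ^ 2).
  destruct (continuity_ab_min (fun u => g u t) (-1) 1) as [m [Hm hm]];
    [lra | intros c _; apply continuity_2d_pt_slice_u, continuity_2d_pt_speed_sq |].
  assert (mpos : 0 < g m t) by exact (Ht m hm).
  destruct (uniform_continuity_2d_1d g (-1) 1 t (fun u _ => continuity_2d_pt_speed_sq u t)
              (mkposreal _ mpos)) as [d Hd].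
  exists d. split; [apply cond_pos|]. intros s u hs hu.
  pose proof (cond_pos d). apply Rabs_def2 in hs.
  assert (E := Hd u t u s hu ltac:(lra) hu ltac:(lra) ltac:(rewrite Rminus_diag, Rabs_R0; lra)).
  simpl in E. apply Rabs_def2 in E. specialize (Hm u hu). unfold regular. fold (g u s). lra.
Qed.

Lemma speedF_pos u s : Reg u s -> 0 < Sp u s.
Proof. apply sqrt_lt_R0. Qed.

Lemma Cinf_X : Cinf Reg X.
Proof. exact (smooth2_Cinf _ X regular_open HX). Qed.

Lemma Cinf_Y : Cinf Reg Y.
Proof. exact (smooth2_Cinf _ Y regular_open HY). Qed.

Lemma Cinf_speedF : Cinf Reg Sp.
Proof.
  apply (Cinf_sqrt _ regular_open (fun u s => Du X u s ^ 2 + Du Y u s ^ 2)); [easy|].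
  apply Cinf_plus; [exact regular_open | |]; apply Cinf_pow; try exact regular_open;
    apply Cinf_Du; [exact Cinf_X | exact Cinf_Y].
Qed.

Lemma Cinf_DsF F : Cinf Reg F -> Cinf Reg (Ds F).
Proof.
  intros HF. apply Cinf_div; [exact regular_open | | now apply Cinf_Du | exact Cinf_speedF].
  intros u s h. apply Rgt_not_eq, speedF_pos, h.
Qed.

#[local] Hint Resolve regular_open Cinf_X Cinf_Y Cinf_speedF Cinf_DsF : cinf.

Lemma Cinf_curvF : Cinf Reg k.
Proof.
  apply (Cinf_ext _ regular_open
    (fun u s => Ds T1 u s * T2 u s - Ds T2 u s * T1 u s)).
  - intros u s _. symmetry. apply curvF_tan.
  - unfold tanx, tany. solve_Cinf.
Qed.

Lemma Cinf_kderF n : Cinf Reg (kderF X Y n).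
Proof.
  induction n as [|n IHn]; [exact Cinf_curvF|].
  change (kderF X Y (S n)) with (Ds (kderF X Y n)). now apply Cinf_DsF.
Qed.

#[local] Hint Resolve Cinf_curvF Cinf_kderF : cinf.

Lemma Cinf_normal_velocity lam : Cinf Reg (normal_velocity lam X Y).
Proof. unfold normal_velocity. solve_Cinf. Qed.

#[local] Hint Resolve Cinf_normal_velocity : cinf.

Lemma Du_DsF F u s : Reg u s -> Du F u s = Sp u s * Ds F u s.
Proof. intros h. unfold DsF. field. apply Rgt_not_eq, speedF_pos, h. Qed.

Lemma Dt_speedF_eq u s : Reg u s ->
  Dt Sp u s = (Du X u s * Dt (Du X) u s + Du Y u s * Dt (Du Y) u s) / Sp u s.
Proof.
  intros h. pose proof (speedF_pos u s h) as hs.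
  assert (e1 : ex_derive (fun z => Du X u z) s)
    by (apply (Cinf_ex_derive_t Reg); eauto with cinf).
  assert (e2 : ex_derive (fun z => Du Y u z) s)
    by (apply (Cinf_ex_derive_t Reg); eauto with cinf).
  assert (e1' := ex_derive_pow (fun z => Du X u z) 2 s e1).
  assert (e2' := ex_derive_pow (fun z => Du Y u z) 2 s e2).
  change (Dt Sp u s) with (Derive (fun z => sqrt (Du X u z ^ 2 + Du Y u z ^ 2)) s).
  rewrite (Derive_sqrt (fun z => Du X u z ^ 2 + Du Y u z ^ 2));
    [| apply (ex_derive_plus (fun z => Du X u z ^ 2)); assumption | exact h].
  change (Derive (fun z => Du X u z ^ 2 + Du Y u z ^ 2) s)
    with (Dt (fun a b => Du X a b ^ 2 + Du Y a b ^ 2) u s).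
  rewrite Dt_plus, !Dt_pow by assumption.
  change (sqrt (Du X u s ^ 2 + Du Y u s ^ 2)) with (Sp u s).
  change (INR 2) with (1 + 1). simpl. field. lra.
Qed.

Lemma tan_unit u s : Reg u s -> T1 u s ^ 2 + T2 u s ^ 2 = 1.
Proof.
  intros h. pose proof (speedF_pos u s h) as hs.
  assert (E : Sp u s ^ 2 = Du X u s ^ 2 + Du Y u s ^ 2).
  { rewrite <- Rsqr_pow2. apply Rsqr_sqrt. apply Rlt_le, h. }
  unfold tanx, tany, DsF. field_simplify; [|lra]. rewrite <- E. field. lra.
Qed.

Lemma tan_DsF_orth u s : Reg u s -> T1 u s * Ds T1 u s + T2 u s * Ds T2 u s = 0.
Proof.
  intros h. pose proof (speedF_pos u s h) as hs.
  assert (E : Du (fun a b => T1 a b ^ 2 + T2 a b ^ 2) u s = 0).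
  { rewrite (Du_ext_Om Reg regular_open _ (fun _ _ => 1));
      [unfold Du; apply Derive_const | | exact h].
    exact tan_unit. }
  assert (e1 : ex_derive (fun v => T1 v s) u) by (apply (Cinf_ex_derive_u Reg); eauto with cinf).
  assert (e2 : ex_derive (fun v => T2 v s) u) by (apply (Cinf_ex_derive_u Reg); eauto with cinf).
  rewrite Du_plus, !Du_pow, !(Du_DsF _ u s h) in E; try assumption;
    try (apply (ex_derive_pow (fun v => _ v s)); assumption).
  simpl in E. apply Rmult_eq_reg_l with (2 * Sp u s); lra.
Qed.

Lemma DsF_tanx u s : Reg u s -> Ds T1 u s = k u s * T2 u s.
Proof.
  intros h. rewrite curvF_tan.
  pose proof (tan_unit u s h) as U. pose proof (tan_DsF_orth u s h) as O.
  transitivity (Ds T1 u s * (T1 u s ^ 2 + T2 u s ^ 2)); [rewrite U; ring|].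
  transitivity ((Ds T1 u s * T2 u s - Ds T2 u s * T1 u s) * T2 u s
    + T1 u s * (T1 u s * Ds T1 u s + T2 u s * Ds T2 u s)); [ring|].
  rewrite O. ring.
Qed.

Lemma DsF_tany u s : Reg u s -> Ds T2 u s = - k u s * T1 u s.
Proof.
  intros h. rewrite curvF_tan.
  pose proof (tan_unit u s h) as U. pose proof (tan_DsF_orth u s h) as O.
  transitivity (Ds T2 u s * (T1 u s ^ 2 + T2 u s ^ 2)); [rewrite U; ring|].
  transitivity (- (Ds T1 u s * T2 u s - Ds T2 u s * T1 u s) * T1 u s
    + T2 u s * (T1 u s * Ds T1 u s + T2 u s * Ds T2 u s)); [ring|].
  rewrite O. ring.
Qed.

Section Velocity.
Variable lam : R.
Local Notation V := (normal_velocity lam X Y).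

Lemma Du_velocity_x u s : Reg u s ->
  Du (fun a b => V a b * - T2 a b) u s = Sp u s * (Ds V u s * - T2 u s + V u s * (k u s * T1 u s)).
Proof.
  intros h.
  assert (eV : ex_derive (fun v => V v s) u) by (apply (Cinf_ex_derive_u Reg); eauto with cinf).
  assert (e2 : ex_derive (fun v => T2 v s) u) by (apply (Cinf_ex_derive_u Reg); eauto with cinf).
  rewrite Du_mult, Du_opp, !(Du_DsF _ u s h), DsF_tany by
    first [exact h | exact eV | exact (ex_derive_opp (fun v => T2 v s) u e2)].
  ring.
Qed.

Lemma Du_velocity_y u s : Reg u s ->
  Du (fun a b => V a b * T1 a b) u s = Sp u s * (Ds V u s * T1 u s + V u s * (k u s * T2 u s)).
Proof.
  intros h.
  assert (eV : ex_derive (fun v => V v s) u) by (apply (Cinf_ex_derive_u Reg); eauto with cinf).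
  assert (e1 : ex_derive (fun v => T1 v s) u) by (apply (Cinf_ex_derive_u Reg); eauto with cinf).
  rewrite Du_mult, !(Du_DsF _ u s h), DsF_tanx by assumption.
  ring.
Qed.

Lemma DsF_normal_velocity u s : Reg u s ->
  Ds V u s = kderF X Y 3 u s + 3/2 * k u s ^ 2 * kderF X Y 1 u s - lam * kderF X Y 1 u s.
Proof.
  intros h. pose proof (speedF_pos u s h) as hs.
  assert (ek : ex_derive (fun v => k v s) u) by (apply (Cinf_ex_derive_u Reg); eauto with cinf).
  assert (e2 : ex_derive (fun v => kderF X Y 2 v s) u)
    by (apply (Cinf_ex_derive_u Reg); eauto with cinf).
  unfold DsF at 1, normal_velocity.
  rewrite Du_minus, Du_plus, !Du_scal, Du_pow, !(Du_DsF _ u s h); try assumption.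
  - change (Ds (kderF X Y 2)) with (kderF X Y 3). change (Ds k) with (kderF X Y 1).
    change (INR 3) with (1 + 1 + 1). simpl. field. lra.
  - apply (ex_derive_scal (fun v => k v s ^ 3)), (ex_derive_pow (fun v => k v s)), ek.
  - apply (ex_derive_plus (fun v => kderF X Y 2 v s)); [exact e2|].
    apply (ex_derive_scal (fun v => k v s ^ 3)), (ex_derive_pow (fun v => k v s)), ek.
  - apply (ex_derive_scal (fun v => k v s)), ek.
Qed.
End Velocity.
End MovingCurve.

#[export] Hint Resolve regular_open Cinf_X Cinf_Y Cinf_speedF Cinf_DsF Cinf_curvF Cinf_kderF
  Cinf_normal_velocity : cinf.

(** * Integration by parts and the pointwise estimate *)

Definition curv_rate (lam : R) (X Y : R -> R -> R) : R -> R -> R :=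
  fun u s => - DsF X Y (DsF X Y (normal_velocity lam X Y)) u s
             - curvF X Y u s ^ 2 * normal_velocity lam X Y u s.

Lemma supnorm_ge (w : R -> R) : (forall u, -1 <= u <= 1 -> continuity_pt w u) ->
  forall u, -1 <= u <= 1 -> Rabs (w u) <= supnorm w.
Proof.
  intros Hc u hu.
  destruct (continuity_ab_maj (fun v => Rabs (w v)) (-1) 1) as [M [HM hM]]; [lra| |].
  { intros c hc. apply continuity_pt_comp with (f1 := w) (f2 := Rabs);
      [now apply Hc | apply Rcontinuity_abs]. }
  unfold supnorm.
  destruct (Lub_Rbar_correct (fun r => exists u, -1 <= u <= 1 /\ r = Rabs (w u))) as [Hub Hlub].
  assert (h1 := Hub (Rabs (w u)) (ex_intro _ u (conj hu eq_refl))).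
  assert (h2 := Hlub (Finite (Rabs (w M)))).
  destruct (Lub_Rbar _) as [l| |]; simpl in *; [exact h1 | | destruct h1].
  exfalso. apply h2. intros r [v [hv ->]]. simpl. now apply HM.
Qed.

Lemma pointwise_estimate (K1 K2 K3 k kb lam Sn : R) : 0 < lam -> (k - kb) ^ 2 <= Sn ^ 2 ->
  -2 * K3 ^ 2 - 2 * lam * K2 ^ 2 + 5 * (k - kb) ^ 2 * K2 ^ 2 + 10 * kb * (k - kb) * K2 ^ 2
  - 5 * kb ^ 2 * K1 * K3 - 5/3 * K1 ^ 4 - 11/2 * k ^ 4 * K1 ^ 2 + 7 * lam * k ^ 2 * K1 ^ 2
  <= - (1/8) * K3 ^ 2 - 13/6 * kb ^ 4 * K1 ^ 2 - 2 * lam * K2 ^ 2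
     + 14 * lam * (Sn ^ 2 + kb ^ 2) * K1 ^ 2 - 22 * kb ^ 3 * ((k - kb) * K1 ^ 2)
     + 5 * ((k - kb) ^ 2 * K2 ^ 2) + 10 * kb * ((k - kb) * K2 ^ 2).
Proof.
  intros hlam hSn. set (w := k - kb) in *. replace k with (kb + w) by (unfold w; ring).
  apply Rminus_le.
  match goal with |- ?A - ?B <= 0 => assert (E : B - A =
    15/8 * (K3 + 4/3 * kb ^ 2 * K1) ^ 2 + 5/3 * (K1 ^ 2) ^ 2
    + 11/2 * (w * K1) ^ 2 * ((w + 2 * kb) ^ 2 + 2 * kb ^ 2)
    + 7 * lam * ((kb - w) * K1) ^ 2 + 14 * lam * (Sn ^ 2 - w ^ 2) * K1 ^ 2) by field end.
  assert (0 <= (K3 + 4/3 * kb ^ 2 * K1) ^ 2) by apply pow2_ge_0.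
  assert (0 <= (K1 ^ 2) ^ 2) by apply pow2_ge_0.
  assert (0 <= (w * K1) ^ 2 * ((w + 2 * kb) ^ 2 + 2 * kb ^ 2))
    by (apply Rmult_le_pos; [apply pow2_ge_0 | pose proof (pow2_ge_0 (w + 2 * kb));
                             pose proof (pow2_ge_0 kb); lra]).
  assert (0 <= lam * ((kb - w) * K1) ^ 2) by (apply Rmult_le_pos; [lra | apply pow2_ge_0]).
  assert (0 <= lam * ((Sn ^ 2 - w ^ 2) * K1 ^ 2))
    by (apply Rmult_le_pos; [lra | apply Rmult_le_pos; [lra | apply pow2_ge_0]]).
  lra.
Qed.

Definition estimate_density (lam kb Sn : R) (X Y : R -> R -> R) : R -> R -> R :=
  fun u s =>
    let k := curvF X Y u s in
    let K1 := kderF X Y 1 u s in let K2 := kderF X Y 2 u s in let K3 := kderF X Y 3 u s in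
    - (1/8) * K3 ^ 2 - 13/6 * kb ^ 4 * K1 ^ 2 - 2 * lam * K2 ^ 2
    + 14 * lam * (Sn ^ 2 + kb ^ 2) * K1 ^ 2 - 22 * kb ^ 3 * ((k - kb) * K1 ^ 2)
    + 5 * ((k - kb) ^ 2 * K2 ^ 2) + 10 * kb * ((k - kb) * K2 ^ 2).

Definition energy_rate_density (lam : R) (X Y : R -> R -> R) : R -> R -> R :=
  fun u s => 2 * kderF X Y 1 u s * DsF X Y (curv_rate lam X Y) u s
             - curvF X Y u s * normal_velocity lam X Y u s * kderF X Y 1 u s ^ 2.

(* Found by integrating [energy_rate_density] by parts.  The last term [5 kb^2 k_s k_ss]
   vanishes at both ends; it trades [5 kb^2 k_ss^2] for [- 5 kb^2 k_s k_sss], which is what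
   [pointwise_estimate] needs. *)
Definition ibp_flux (lam kb : R) (X Y : R -> R -> R) : R -> R -> R :=
  fun u s =>
    let k := curvF X Y u s in let K1 := kderF X Y 1 u s in let K2 := kderF X Y 2 u s in
    2 * K1 * curv_rate lam X Y u s + 2 * K2 * DsF X Y (normal_velocity lam X Y) u s
    + k ^ 5 * K1 - 2 * lam * k ^ 3 * K1 - 3 * k ^ 2 * K1 * K2 + 2 * lam * K1 * K2
    + 5/3 * k * K1 ^ 3 + 5 * kb ^ 2 * K1 * K2.

Definition reduced_density (lam kb : R) (X Y : R -> R -> R) : R -> R -> R :=
  fun u s =>
    let k := curvF X Y u s in
    let K1 := kderF X Y 1 u s in let K2 := kderF X Y 2 u s in let K3 := kderF X Y 3 u s in
    -2 * K3 ^ 2 - 2 * lam * K2 ^ 2 + 5 * (k - kb) ^ 2 * K2 ^ 2 + 10 * kb * (k - kb) * K2 ^ 2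
    - 5 * kb ^ 2 * K1 * K3 - 5/3 * K1 ^ 4 - 11/2 * k ^ 4 * K1 ^ 2 + 7 * lam * k ^ 2 * K1 ^ 2.

Section IntegrationByParts.
Variables (X Y : R -> R -> R) (lam kb : R).
Hypotheses (HX : smooth2 X) (HY : smooth2 Y).

Local Notation Reg := (regular X Y).
Local Notation Sp := (speedF X Y).
Local Notation Ds := (DsF X Y).
Local Notation k := (curvF X Y).
Local Notation K1 := (kderF X Y 1).
Local Notation K2 := (kderF X Y 2).
Local Notation V := (normal_velocity lam X Y).
Local Notation W := (curv_rate lam X Y).
Local Notation E := (energy_rate_density lam X Y).
Local Notation J := (reduced_density lam kb X Y).
Local Notation Psi := (ibp_flux lam kb X Y).

Lemma Cinf_curv_rate : Cinf Reg W.
Proof. unfold curv_rate. solve_Cinf. Qed.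

#[local] Hint Resolve Cinf_curv_rate : cinf.

Lemma is_derive_ibp_flux u s : Reg u s ->
  is_derive (fun v => Psi v s) u ((E u s - J u s) * Sp u s).
Proof.
  intros h. pose proof (speedF_pos X Y u s h) as hs.
  set (fk := fun v => k v s). set (f1 := fun v => K1 v s). set (f2 := fun v => K2 v s).
  set (fW := fun v => W v s). set (fd := fun v => Ds V v s).
  assert (dk : Derive fk u = Sp u s * K1 u s) by exact (Du_DsF X Y k u s h).
  assert (d1 : Derive f1 u = Sp u s * K2 u s) by exact (Du_DsF X Y K1 u s h).
  assert (d2 : Derive f2 u = Sp u s * kderF X Y 3 u s) by exact (Du_DsF X Y K2 u s h).
  assert (dW : Derive fW u = Sp u s * Ds W u s) by exact (Du_DsF X Y W u s h).
  assert (dd : Derive fd u = Sp u s * Ds (Ds V) u s) by exact (Du_DsF X Y (Ds V) u s h).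
  assert (ek : ex_derive fk u) by (apply (Cinf_ex_derive_u Reg); eauto with cinf).
  assert (e1 : ex_derive f1 u) by (apply (Cinf_ex_derive_u Reg); eauto with cinf).
  assert (e2 : ex_derive f2 u) by (apply (Cinf_ex_derive_u Reg); eauto with cinf).
  assert (eW : ex_derive fW u) by (apply (Cinf_ex_derive_u Reg); eauto with cinf).
  assert (ed : ex_derive fd u) by (apply (Cinf_ex_derive_u Reg); eauto with cinf).
  change (is_derive (fun v => 2 * f1 v * fW v + 2 * f2 v * fd v + fk v ^ 5 * f1 v
    - 2 * lam * fk v ^ 3 * f1 v - 3 * fk v ^ 2 * f1 v * f2 v + 2 * lam * f1 v * f2 v
    + 5/3 * fk v * f1 v ^ 3 + 5 * kb ^ 2 * f1 v * f2 v) u ((E u s - J u s) * Sp u s)).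
  assert (qk : fk u = k u s) by reflexivity. assert (q1 : f1 u = K1 u s) by reflexivity.
  assert (q2 : f2 u = K2 u s) by reflexivity. assert (qW : fW u = W u s) by reflexivity.
  assert (qd : fd u = Ds V u s) by reflexivity.
  clearbody fk f1 f2 fW fd.
  auto_derive; [repeat split; assumption|].
  change (Derive (fun x => ?f x) u) with (Derive f u).
  rewrite dk, d1, d2, dW, dd, qk, q1, q2, qW, qd.
  unfold energy_rate_density, reduced_density. cbv zeta.
  rewrite DsF_normal_velocity by assumption. unfold curv_rate, normal_velocity. field.
Qed.

Section FixedTime.
Variable s : R.
Hypothesis regular_s : forall u, -1 <= u <= 1 -> Reg u s.

Lemma regular_s_Rmin_Rmax u : Rmin (-1) 1 <= u <= Rmax (-1) 1 -> Reg u s.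
Proof. rewrite Rmin_left, Rmax_right by lra. apply regular_s. Qed.

Lemma Cinf_energy_rate_density : Cinf Reg E.
Proof. unfold energy_rate_density. solve_Cinf. Qed.

Lemma Cinf_reduced_density : Cinf Reg J.
Proof. unfold reduced_density. cbv zeta. solve_Cinf. Qed.

Lemma RInt_energy_rate_density :
  K1 (-1) s = 0 -> K1 1 s = 0 -> Ds V (-1) s = 0 -> Ds V 1 s = 0 ->
  RInt (fun u => E u s * Sp u s) (-1) 1 = RInt (fun u => J u s * Sp u s) (-1) 1.
Proof.
  intros K1a K1b DVa DVb.
  assert (HJ : ex_RInt (fun u => J u s * Sp u s) (-1) 1).
  { apply (Cinf_ex_RInt Reg (fun a b => J a b * Sp a b)); [|exact regular_s_Rmin_Rmax].
    pose proof Cinf_reduced_density. solve_Cinf. }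
  assert (IBP : is_RInt (fun u => (E u s - J u s) * Sp u s) (-1) 1 0).
  { replace 0 with (minus (Psi 1 s) (Psi (-1) s)).
    - apply (is_RInt_derive (V := R_CompleteNormedModule) (fun v => Psi v s)
               (fun u => (E u s - J u s) * Sp u s)).
      + intros u hu. now apply is_derive_ibp_flux, regular_s_Rmin_Rmax.
      + intros u hu.
        assert (HEJ : Cinf Reg (fun a b => (E a b - J a b) * Sp a b)).
        { pose proof Cinf_energy_rate_density. pose proof Cinf_reduced_density. solve_Cinf. }
        exact (Cinf_continuous_u Reg _ u s HEJ (regular_s_Rmin_Rmax u hu)).
    - unfold ibp_flux. cbv zeta. rewrite K1a, K1b, DVa, DVb.
      unfold minus, plus, opp. simpl. ring. }
  apply (is_RInt_unique (V := R_CompleteNormedModule)).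
  apply (is_RInt_ext (fun u => (E u s - J u s) * Sp u s + J u s * Sp u s)).
  - intros u _. simpl. ring.
  - rewrite <- (Rplus_0_l (RInt _ _ _)).
    apply is_RInt_plus_R; [exact IBP | exact (RInt_correct (V := R_CompleteNormedModule) _ _ _ HJ)].
Qed.

Lemma RInt_reduced_density_le : 0 < lam ->
  RInt (fun u => J u s * Sp u s) (-1) 1
  <= RInt (fun u => estimate_density lam kb (supnorm (fun v => k v s - kb)) X Y u s * Sp u s)
       (-1) 1.
Proof.
  intros hlam.
  apply RInt_le; [lra | apply (Cinf_ex_RInt Reg (fun a b => J a b * Sp a b)) |
                  apply (Cinf_ex_RInt Reg (fun a b => estimate_density _ _ _ X Y a b * Sp a b)) |];
    try exact regular_s_Rmin_Rmax.
  - pose proof Cinf_reduced_density. solve_Cinf.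
  - unfold estimate_density. cbv zeta. solve_Cinf.
  - intros u hu. assert (h : Reg u s) by (apply regular_s; lra).
    apply Rmult_le_compat_r; [apply Rlt_le, speedF_pos, h|].
    apply pointwise_estimate; [exact hlam|].
    rewrite <- pow2_abs. apply pow_incr. split; [apply Rabs_pos|].
    apply (supnorm_ge (fun v => k v s - kb)); [|lra].
    intros v hv. apply continuity_pt_filterlim.
    assert (Hk : Cinf Reg (fun a b => k a b - kb)) by solve_Cinf.
    exact (Cinf_continuous_u Reg _ v s Hk (regular_s v hv)).
Qed.

Lemma RInt_estimate_density Sn :
  RInt (fun u => estimate_density lam kb Sn X Y u s * Sp u s) (-1) 1 =
  - (1/8) * arcint (fun v => X v s) (fun v => Y v s)
              (fun u => kder (fun v => X v s) (fun v => Y v s) 3 u ^ 2)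
  - 13/6 * kb ^ 4 * arcint (fun v => X v s) (fun v => Y v s)
              (fun u => kder (fun v => X v s) (fun v => Y v s) 1 u ^ 2)
  - 2 * lam * arcint (fun v => X v s) (fun v => Y v s)
              (fun u => kder (fun v => X v s) (fun v => Y v s) 2 u ^ 2)
  + 14 * lam * (Sn ^ 2 + kb ^ 2) * arcint (fun v => X v s) (fun v => Y v s)
              (fun u => kder (fun v => X v s) (fun v => Y v s) 1 u ^ 2)
  - 22 * kb ^ 3 * arcint (fun v => X v s) (fun v => Y v s)
              (fun u => (curv (fun v => X v s) (fun v => Y v s) u - kb)
                        * kder (fun v => X v s) (fun v => Y v s) 1 u ^ 2)
  + 5 * arcint (fun v => X v s) (fun v => Y v s)
              (fun u => (curv (fun v => X v s) (fun v => Y v s) u - kb) ^ 2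
                        * kder (fun v => X v s) (fun v => Y v s) 2 u ^ 2)
  + 10 * kb * arcint (fun v => X v s) (fun v => Y v s)
              (fun u => (curv (fun v => X v s) (fun v => Y v s) u - kb)
                        * kder (fun v => X v s) (fun v => Y v s) 2 u ^ 2).
Proof.
  unfold arcint. apply (is_RInt_unique (V := R_CompleteNormedModule)).
  eapply is_RInt_ext; [|is_RInt_lincomb].
  - intros u _. unfold estimate_density, kderF, speedF, curvF. cbv zeta.
    match goal with |- @eq _ ?a ?b => change (@eq R a b) end. ring.
  - all: match goal with
      | |- ex_RInt (fun u => kder _ _ ?n u ^ 2 * _) _ _ =>
          apply (Cinf_ex_RInt Reg (fun a b => kderF X Y n a b ^ 2 * Sp a b))
      | |- ex_RInt (fun u => (curv _ _ u - kb) * kder _ _ ?n u ^ 2 * _) _ _ =>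
          apply (Cinf_ex_RInt Reg (fun a b => (k a b - kb) * kderF X Y n a b ^ 2 * Sp a b))
      | |- ex_RInt (fun u => (curv _ _ u - kb) ^ 2 * kder _ _ ?n u ^ 2 * _) _ _ =>
          apply (Cinf_ex_RInt Reg (fun a b => (k a b - kb) ^ 2 * kderF X Y n a b ^ 2 * Sp a b))
      end; [solve_Cinf|].
    all: exact regular_s_Rmin_Rmax.
Qed.
End FixedTime.
End IntegrationByParts.

#[export] Hint Resolve Cinf_curv_rate : cinf.

(** * Evolution along the flow *)

Section Flow.
Variables (X Y : R -> R -> R) (lam : R).
Hypotheses (HX : smooth2 X) (HY : smooth2 Y).

Local Notation Reg := (regular X Y).
Local Notation Sp := (speedF X Y).
Local Notation Ds := (DsF X Y).
Local Notation T1 := (tanx X Y).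
Local Notation T2 := (tany X Y).
Local Notation k := (curvF X Y).
Local Notation K1 := (kderF X Y 1).
Local Notation V := (normal_velocity lam X Y).
Local Notation W := (curv_rate lam X Y).

Hypothesis flow_regular : forall u s, -1 <= u <= 1 -> 0 <= s -> Reg u s.
Hypothesis flow_equation : forall u s, -1 <= u <= 1 -> 0 <= s ->
  Dt X u s = V u s * - T2 u s /\ Dt Y u s = V u s * T1 u s.

Section FixedTime.
Variable t : R.
Hypothesis ht : 0 <= t.

Lemma regular_interior u : -1 < u < 1 -> Reg u t.
Proof. intros hu. apply flow_regular; lra. Qed.

Lemma Du_Dt_X u : -1 <= u <= 1 ->
  Du (Dt X) u t = Sp u t * (Ds V u t * - T2 u t + V u t * (k u t * T1 u t)).
Proof.
  intros hu. assert (h : Reg u t) by (apply flow_regular; assumption).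
  rewrite (Du_ext_closed_interval _ (fun a b => V a b * - T2 a b)).
  - now apply Du_velocity_x.
  - apply (Cinf_continuity Reg); eauto with cinf.
  - apply (Cinf_continuity Reg); [apply Cinf_Du; solve_Cinf | exact h].
  - intros v hv. apply flow_equation; lra.
  - exact hu.
Qed.

Lemma Du_Dt_Y u : -1 <= u <= 1 ->
  Du (Dt Y) u t = Sp u t * (Ds V u t * T1 u t + V u t * (k u t * T2 u t)).
Proof.
  intros hu. assert (h : Reg u t) by (apply flow_regular; assumption).
  rewrite (Du_ext_closed_interval _ (fun a b => V a b * T1 a b)).
  - now apply Du_velocity_y.
  - apply (Cinf_continuity Reg); eauto with cinf.
  - apply (Cinf_continuity Reg); [apply Cinf_Du; solve_Cinf | exact h].
  - intros v hv. apply flow_equation; lra.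
  - exact hu.
Qed.

Lemma Dt_speedF u : -1 < u < 1 -> Dt Sp u t = k u t * V u t * Sp u t.
Proof.
  intros hu. pose proof (regular_interior u hu) as h. pose proof (speedF_pos X Y u t h) as hs.
  rewrite Dt_speedF_eq, !(Cinf_Dt_Du Reg), Du_Dt_X, Du_Dt_Y, !(Du_DsF X Y _ u t h);
    try assumption; eauto with cinf; try lra.
  fold (T1 u t) (T2 u t).
  transitivity (k u t * V u t * Sp u t * (T1 u t ^ 2 + T2 u t ^ 2)); [field; lra|].
  rewrite tan_unit; [ring | assumption..].
Qed.

Lemma Dt_DsF F G u : Cinf Reg F -> (forall v, -1 < v < 1 -> Dt F v t = G v t) -> -1 < u < 1 ->
  Dt (Ds F) u t = Ds G u t - k u t * V u t * Ds F u t.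
Proof.
  intros HF E hu. pose proof (regular_interior u hu) as h.
  pose proof (speedF_pos X Y u t h) as hs.
  change (Ds F) with (fun a b => Du F a b / Sp a b).
  rewrite Dt_div, (Cinf_Dt_Du Reg), (Du_ext_interval (Dt F) G), Dt_speedF;
    try (apply (Cinf_ex_derive_t Reg)); eauto with cinf; try lra.
  unfold DsF. field. lra.
Qed.

Lemma Dt_tanx u : -1 < u < 1 -> Dt T1 u t = - Ds V u t * T2 u t.
Proof.
  intros hu. pose proof (regular_interior u hu) as h.
  pose proof (speedF_pos X Y u t h) as hs.
  unfold tanx at 1. rewrite (Dt_DsF X (fun a b => V a b * - T2 a b)); eauto with cinf.
  - unfold DsF at 1. rewrite Du_velocity_x by assumption. fold (T1 u t). field. lra.
  - intros v hv. apply flow_equation; lra.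
Qed.

Lemma Dt_tany u : -1 < u < 1 -> Dt T2 u t = Ds V u t * T1 u t.
Proof.
  intros hu. pose proof (regular_interior u hu) as h.
  pose proof (speedF_pos X Y u t h) as hs.
  unfold tany at 1. rewrite (Dt_DsF Y (fun a b => V a b * T1 a b)); eauto with cinf.
  - unfold DsF at 1. rewrite Du_velocity_y by assumption. fold (T2 u t). field. lra.
  - intros v hv. apply flow_equation; lra.
Qed.

Lemma Dt_DsF_tanx u : -1 < u < 1 -> Dt (Ds T1) u t =
  - Ds (Ds V) u t * T2 u t + Ds V u t * k u t * T1 u t - k u t ^ 2 * V u t * T2 u t.
Proof.
  intros hu. pose proof (regular_interior u hu) as h.
  pose proof (speedF_pos X Y u t h) as hs.
  assert (eV : ex_derive (fun v => Ds V v t) u) by (apply (Cinf_ex_derive_u Reg); eauto with cinf).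
  assert (e2 : ex_derive (fun v => T2 v t) u) by (apply (Cinf_ex_derive_u Reg); eauto with cinf).
  rewrite (Dt_DsF T1 (fun a b => - Ds V a b * T2 a b)); eauto with cinf; [|exact Dt_tanx].
  unfold DsF at 1.
  rewrite Du_mult, Du_opp, !(Du_DsF X Y _ u t h), DsF_tany, DsF_tanx;
    try first [assumption | apply (ex_derive_opp (fun v => Ds V v t)); assumption].
  field. lra.
Qed.

Lemma Dt_DsF_tany u : -1 < u < 1 -> Dt (Ds T2) u t =
  Ds (Ds V) u t * T1 u t + Ds V u t * k u t * T2 u t + k u t ^ 2 * V u t * T1 u t.
Proof.
  intros hu. pose proof (regular_interior u hu) as h.
  pose proof (speedF_pos X Y u t h) as hs.
  assert (eV : ex_derive (fun v => Ds V v t) u) by (apply (Cinf_ex_derive_u Reg); eauto with cinf).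
  assert (e1 : ex_derive (fun v => T1 v t) u) by (apply (Cinf_ex_derive_u Reg); eauto with cinf).
  rewrite (Dt_DsF T2 (fun a b => Ds V a b * T1 a b)); eauto with cinf; [|exact Dt_tany].
  unfold DsF at 1.
  rewrite Du_mult, !(Du_DsF X Y _ u t h), DsF_tany, DsF_tanx by assumption.
  field. lra.
Qed.

Lemma Dt_curvF u : -1 < u < 1 -> Dt k u t = W u t.
Proof.
  intros hu. pose proof (regular_interior u hu) as h.
  assert (e1 : ex_derive (fun z => T1 u z) t) by (apply (Cinf_ex_derive_t Reg); eauto with cinf).
  assert (e2 : ex_derive (fun z => T2 u z) t) by (apply (Cinf_ex_derive_t Reg); eauto with cinf).
  assert (d1 : ex_derive (fun z => Ds T1 u z) t) by (apply (Cinf_ex_derive_t Reg); eauto with cinf).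
  assert (d2 : ex_derive (fun z => Ds T2 u z) t) by (apply (Cinf_ex_derive_t Reg); eauto with cinf).
  transitivity (Dt (fun a b => Ds T1 a b * T2 a b - Ds T2 a b * T1 a b) u t).
  { unfold Dt. apply Derive_ext. intros z. apply curvF_tan. }
  rewrite Dt_minus by (apply (ex_derive_mult (fun z => Ds _ u z)); assumption).
  rewrite !Dt_mult by assumption.
  rewrite Dt_DsF_tanx, Dt_DsF_tany, Dt_tanx, Dt_tany, DsF_tanx, DsF_tany by assumption.
  unfold curv_rate.
  transitivity ((- Ds (Ds V) u t - k u t ^ 2 * V u t) * (T1 u t ^ 2 + T2 u t ^ 2)); [ring|].
  rewrite tan_unit by assumption. ring.
Qed.

Lemma Dt_kderF1 u : -1 < u < 1 -> Dt K1 u t = Ds W u t - k u t * V u t * K1 u t.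
Proof. intros hu. exact (Dt_DsF k W u (Cinf_curvF X Y HX HY) Dt_curvF hu). Qed.

Lemma Dt_kderF1_sq_speedF u : -1 < u < 1 ->
  Dt (fun a b => K1 a b ^ 2 * Sp a b) u t = energy_rate_density lam X Y u t * Sp u t.
Proof.
  intros hu. pose proof (regular_interior u hu) as h.
  assert (e1 : ex_derive (fun z => K1 u z) t) by (apply (Cinf_ex_derive_t Reg); eauto with cinf).
  rewrite Dt_mult, Dt_pow, Dt_kderF1, Dt_speedF; try assumption.
  - unfold energy_rate_density. simpl. ring.
  - apply (ex_derive_pow (fun z => K1 u z)), e1.
  - apply (Cinf_ex_derive_t Reg); eauto with cinf.
Qed.

(* Differentiating the orthogonality relation in time gives [V_s <nu, e> = 0], and the
   normal [nu] is parallel to the ray [e]. *)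
Lemma DsF_velocity_perpendicular_end u0 c : (u0 = -1 \/ u0 = 1) ->
  (forall s, 0 <= s -> Du X u0 s * cos c + Du Y u0 s * sin c = 0) -> Ds V u0 t = 0.
Proof.
  intros hu0 Hperp.
  assert (hu : -1 <= u0 <= 1) by lra.
  assert (h : Reg u0 t) by (apply flow_regular; assumption).
  pose proof (speedF_pos X Y u0 t h) as hs.
  assert (D0 : Dt (Du X) u0 t * cos c + Dt (Du Y) u0 t * sin c = 0).
  { apply (is_derive_vanishing_right (fun s => Du X u0 s * cos c + Du Y u0 s * sin c) t);
      [|intros s hs'; apply Hperp; lra].
    apply (is_derive_plus (fun s => Du X u0 s * cos c));
      apply (is_derive_scal_l (V := R_NormedModule)), Derive_correct;
      apply (Cinf_ex_derive_t Reg); eauto with cinf. }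
  rewrite !(Cinf_Dt_Du Reg), Du_Dt_X, Du_Dt_Y in D0; eauto with cinf.
  assert (P : T1 u0 t * cos c + T2 u0 t * sin c = 0).
  { pose proof (Hperp t ht) as P. rewrite !(Du_DsF X Y _ u0 t h) in P.
    apply Rmult_eq_reg_l with (Sp u0 t); [fold (T1 u0 t) (T2 u0 t) in P; lra | lra]. }
  assert (N : (- T2 u0 t * cos c + T1 u0 t * sin c) ^ 2 = 1).
  { pose proof (sin2_cos2 c) as SC. rewrite !Rsqr_pow2 in SC.
    transitivity ((T1 u0 t ^ 2 + T2 u0 t ^ 2) * (sin c ^ 2 + cos c ^ 2)
      - (T1 u0 t * cos c + T2 u0 t * sin c) ^ 2); [ring|].
    rewrite P, tan_unit, SC by assumption. ring. }
  assert (D1 : Ds V u0 t * (- T2 u0 t * cos c + T1 u0 t * sin c) = 0).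
  { apply Rmult_eq_reg_l with (Sp u0 t); [|lra].
    transitivity (Sp u0 t * (Ds V u0 t * - T2 u0 t + V u0 t * (k u0 t * T1 u0 t)) * cos c
      + Sp u0 t * (Ds V u0 t * T1 u0 t + V u0 t * (k u0 t * T2 u0 t)) * sin c
      - Sp u0 t * V u0 t * k u0 t * (T1 u0 t * cos c + T2 u0 t * sin c)); [ring|].
    rewrite D0, P. ring. }
  apply Rmult_integral in D1. destruct D1 as [D1|D1]; [exact D1|].
  rewrite D1 in N. simpl in N. lra.
Qed.

Lemma Derive_kderF1_energy :
  Derive (fun s => RInt (fun u => K1 u s ^ 2 * Sp u s) (-1) 1) t
  = RInt (fun u => energy_rate_density lam X Y u t * Sp u t) (-1) 1.
Proof.
  pose (F := fun a b => K1 a b ^ 2 * Sp a b).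
  assert (HF : Cinf Reg F) by (unfold F; solve_Cinf).
  destruct (regular_near_time X Y HX HY t (fun u hu => flow_regular u t hu ht)) as [d [hd Hd]].
  assert (Hloc : forall s0, Rabs (s0 - t) < d ->
            forall u, Rmin (-1) 1 <= u <= Rmax (-1) 1 -> Reg u s0).
  { intros s0 hs0 u hu. rewrite Rmin_left, Rmax_right in hu by lra. now apply Hd. }
  assert (H1 : is_derive (fun s => RInt (fun u => F u s) (-1) 1) t
                 (RInt (fun u => Dt F u t) (-1) 1)).
  { apply (is_derive_RInt_param (fun s u => F u s)).
    - exists (mkposreal d hd). intros s0 hs0 u hu.
      apply (Cinf_ex_derive_t Reg); [exact HF | now apply Hloc].
    - intros u hu. apply (continuity_2d_pt_swap (Dt F)), (Cinf_continuity Reg); [eauto with cinf|].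
      apply flow_regular; [rewrite Rmin_left, Rmax_right in hu by lra; exact hu | exact ht].
    - exists (mkposreal d hd). intros s0 hs0.
      apply (Cinf_ex_RInt Reg); [exact HF | now apply Hloc]. }
  change (Derive (fun s => RInt (fun u => F u s) (-1) 1) t
    = RInt (fun u => energy_rate_density lam X Y u t * Sp u t) (-1) 1).
  rewrite (is_derive_unique _ _ _ H1).
  apply RInt_ext. intros u hu. rewrite Rmin_left, Rmax_right in hu by lra.
  now apply Dt_kderF1_sq_speedF.
Qed.
End FixedTime.
End Flow.

Theorem mainTheorem3 (th1 th2 lam : R) (X Y : R -> R -> R) :
  0 <= th2 -> th2 < th1 -> th1 < 2 * PI ->
  0 < lam ->
  elastic_flow_cone lam th1 th2 X Y ->
  forall t : R, 0 <= t ->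
    let x := fun v => X v t in
    let y := fun v => Y v t in
    let kb := kbar x y in
    let Iks2 := arcint x y (fun u => (kder x y 1 u) ^ 2) in
    Derive (fun s => arcint (fun v => X v s) (fun v => Y v s)
                        (fun u => (kder (fun v => X v s) (fun v => Y v s) 1 u) ^ 2)) t
    <= - (1/8) * arcint x y (fun u => (kder x y 3 u) ^ 2)
       - (13/6) * kb ^ 4 * Iks2
       - 2 * lam * arcint x y (fun u => (kder x y 2 u) ^ 2)
       + 14 * lam * ((supnorm (fun u => curv x y u - kb)) ^ 2 + kb ^ 2) * Iks2
       - 22 * kb ^ 3 * arcint x y (fun u => (curv x y u - kb) * (kder x y 1 u) ^ 2)
       + 5 * arcint x y (fun u => (curv x y u - kb) ^ 2 * (kder x y 2 u) ^ 2)
       + 10 * kb * arcint x y (fun u => (curv x y u - kb) * (kder x y 2 u) ^ 2).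
Proof.
  intros _ _ _ Hlam [HX [HY [Hspeed [Hev Hbc]]]] t ht. cbv zeta.
  set (kb := kbar (fun v => X v t) (fun v => Y v t)).
  assert (Hreg : forall u s, -1 <= u <= 1 -> 0 <= s -> regular X Y u s)
    by (intros u s hu hs; apply regular_of_speedF, Hspeed; assumption).
  assert (Hflow : forall u s, -1 <= u <= 1 -> 0 <= s ->
    Dt X u s = normal_velocity lam X Y u s * - tany X Y u s /\
    Dt Y u s = normal_velocity lam X Y u s * tanx X Y u s) by exact Hev.
  destruct (Hbc t ht) as [_ [_ [_ [_ [_ [K1a K1b]]]]]].
  assert (DVa : DsF X Y (normal_velocity lam X Y) (-1) t = 0).
  { apply (DsF_velocity_perpendicular_end X Y lam HX HY Hreg Hflow t ht (-1) th1);
      [now left | intros s hs; apply (Hbc s hs)]. }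
  assert (DVb : DsF X Y (normal_velocity lam X Y) 1 t = 0).
  { apply (DsF_velocity_perpendicular_end X Y lam HX HY Hreg Hflow t ht 1 th2);
      [now right | intros s hs; apply (Hbc s hs)]. }
  assert (Hreg_t : forall u, -1 <= u <= 1 -> regular X Y u t) by (intros u hu; now apply Hreg).
  eapply Rle_trans; [|right; apply (RInt_estimate_density X Y lam kb HX HY t Hreg_t)].
  eapply Rle_trans; [right|exact (RInt_reduced_density_le X Y lam kb HX HY t Hreg_t Hlam)].
  rewrite <- (RInt_energy_rate_density X Y lam kb HX HY t Hreg_t K1a K1b DVa DVb).
  exact (Derive_kderF1_energy X Y lam HX HY Hreg Hflow t ht).
Qed.
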